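(* Let $n$ be an odd integer with $2^{k-1}<n<2^k$, where $k=\lceil\log_2 n\rceil$, and suppose $n-1>2^{k-1}$. Let $s(x)=\min_{z\in\mathbb{Z}}|x-z|$ and, for integers $m$, define $f_i(m)=\frac{s(2^{i-k+1}\cdot m)}{2^{i-k+1}}$. Then for every $0\leq i\leq k-3$, $$f_i(n+1)+f_i(n-1)=2f_i(n).$$
   Context: $s(x)$ denotes the distance from the real number $x$ to the nearest integer. *)

From HB Require Import structures.
From mathcomp Require Import all_boot all_order all_algebra.
From mathcomp Require Import boolp classical_sets reals.
Set Implicit Arguments. Unset Strict Implicit. Unset Printing Implicit Defensive.
Import Order.TTheory GRing.Theory Num.Theory.
Local Open Scope ring_scope.
Local Open Scope classical_set_scope.

(* s(x) = min_{z in Z} |x - z| : distance from x to the nearest integer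
   (the minimum is attained, so it equals the infimum). *)
Definition s {R : realType} (x : R) : R :=
  inf [set `|x - z%:~R| | z in [set: int]].

Definition f {R : realType} (k i : nat) (m : int) : R :=
  s ((2%:R : R) ^ (i%:Z - k%:Z + 1) * m%:~R) / (2%:R : R) ^ (i%:Z - k%:Z + 1).

From HB Require Import structures.
From mathcomp Require Import all_boot all_order all_algebra.
From mathcomp Require Import boolp classical_sets reals.
From mathcomp Require Import ring lra zify.
Import Order.TTheory GRing.Theory Num.Theory.
Local Open Scope ring_scope.

(* With d = 2^(k-i-1), f_i(m) = d s(m/d), and m |-> d s(m/d) is affine on every
   interval between consecutive multiples of d/2 = 2^(k-i-2). This half-period is
   even because i <= k-3, so the odd number n lies strictly inside such an
   interval, which then contains n - 1 and n + 1 as well; the identity is the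
   midpoint property of an affine function. *)

Section NearestIntegerDistance.

Variable R : realType.

Lemma s_eq_dist (x : R) (z : int) :
  `|x - z%:~R| <= 1/2 -> s x = `|x - z%:~R|.
Proof.
move=> xz_le; rewrite /s; apply/le_anti/andP; split.
  apply: ge_inf; last by exists z.
  by exists 0 => _ [w _ <-].
apply: lb_le_inf; first by exists `|x - z%:~R|, z.
move=> _ [w _ <-]; have [->|nzw] := eqVneq w z; first by [].
have zw_ge1 : 1 <= `|(z - w)%:~R : R|.
  by rewrite -intr_norm ler1z -gtz0_ge1 normr_gt0 subr_eq0 eq_sym nzw.
have zw_le : `|(z - w)%:~R : R| <= `|x - z%:~R| + `|x - w%:~R|.
  rewrite intrB (_ : z%:~R - w%:~R = (x - w%:~R) - (x - z%:~R)); last by ring.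
  by apply: (le_trans (ler_normB _ _)); rewrite addrC.
lra.
Qed.

Lemma s_affine_on_half_interval (c : int) :
  exists e w : R, forall y : R,
    c%:~R / 2 <= y <= (c + 1)%:~R / 2 -> s y = e * y + w.
Proof.
have [r_ge0 r_lt2] : 0 <= (c %% 2)%Z /\ (c %% 2)%Z < 2.
  by split; [rewrite modz_ge0 | rewrite ltz_pmod].
have c_eq := divz_eq c 2; set q := (c %/ 2)%Z in c_eq.
set r := (c %% 2)%Z in c_eq r_ge0 r_lt2.
have [r0|r1] : r = 0 \/ r = 1 by lia.
- exists 1, (- q%:~R) => y /andP[lo hi].
  move: lo hi; rewrite c_eq r0 addr0 intrD intrM => lo hi.
  by rewrite (@s_eq_dist _ q) ger0_norm; [ring | lra ..].
- exists (-1), (q + 1)%:~R => y /andP[lo hi].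
  move: lo hi; rewrite c_eq r1 -addrA !intrD intrM => lo hi.
  by rewrite (@s_eq_dist _ (q + 1)) intrD ler0_norm; [ring | lra ..].
Qed.

Lemma s_midpoint (x h : R) (c : int) :
  0 <= h -> c%:~R / 2 <= x - h -> x + h <= (c + 1)%:~R / 2 ->
  s (x - h) + s (x + h) = 2 * s x.
Proof.
move=> h_ge0 lo hi; have [e [w s_affine]] := s_affine_on_half_interval c.
rewrite !s_affine; first ring.
all: by apply/andP; split; lra.
Qed.

End NearestIntegerDistance.

Lemma f_eq_scaled_s (R : realType) (k i : nat) (m : int) : (i < k)%N ->
  f (R := R) k i m = s (m%:~R / 2 ^+ (k - i.+1)) * 2 ^+ (k - i.+1).
Proof.
move=> ik; rewrite /f.
have -> : i%:Z - k%:Z + 1 = - ((k - i.+1)%N : int) by lia.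
by rewrite -exprnN invrK (mulrC _ m%:~R).
Qed.

Lemma odd_between_even_multiples (n N : nat) : odd n -> ~~ odd N -> (0 < N)%N ->
  (n %/ N * N < n < (n %/ N).+1 * N)%N.
Proof.
move=> n_odd N_even N_gt0; rewrite ltn_ceil // andbT ltn_neqAle leq_divM andbT.
by apply: contraTneq n_odd => <-; rewrite oddM (negbTE N_even) andbF.
Qed.

Theorem lemma5 (R : realType) (n k : nat) :
  odd n ->
  (2 ^ k.-1 < n < 2 ^ k)%N ->
  k = up_log 2 n ->
  (2 ^ k.-1 < n.-1)%N ->
  forall i : nat, (i + 3 <= k)%N ->
    f (R := R) k i (n%:Z + 1) + f k i (n%:Z - 1) = 2 * f k i n%:Z.
Proof.
move=> n_odd _ _ _ i ik.
set N := (2 ^ (k - i.+2))%N; set c := (n %/ N)%N.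
have N_gt0 : (0 < N)%N by rewrite expn_gt0.
have N_even : ~~ odd N by rewrite oddX; lia.
have /andP[c_lt c_gt] := odd_between_even_multiples _ _ n_odd N_even N_gt0.
have lo : (c%:R : R) * N%:R <= n%:R - 1.
  by rewrite -natrM lerBrDr natr1 ler_nat.
have hi : (n%:R : R) + 1 <= (c%:R + 1) * N%:R.
  by rewrite !natr1 -natrM ler_nat.
set d : R := 2 * N%:R.
have d_eq : (2 : R) ^+ (k - i.+1) = d.
  by rewrite /d natrX -exprS; congr (_ ^+ _); lia.
have d_gt0 : 0 < d by rewrite mulr_gt0 ?ltr0n.
have mid : s ((n%:Z - 1)%:~R / d) + s ((n%:Z + 1)%:~R / d) = 2 * s (n%:Z%:~R / d).
  rewrite intrB intrD -pmulrn mulrBl [in LHS]mulrDl.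
  apply: (@s_midpoint _ _ _ c%:Z); rewrite ?divr_ge0 ?(ltW d_gt0) //.
  - by rewrite -mulrBl ler_pdivlMr // -pmulrn /d mulrA divfK ?pnatr_eq0.
  - by rewrite -mulrDl ler_pdivrMr // intrD -pmulrn /d mulrA divfK ?pnatr_eq0.
rewrite !f_eq_scaled_s ?d_eq; try lia.
by rewrite -mulrDl addrC mid -mulrA.
Qed.
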